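(* (1) For every nilpotent $n\times n$ matrix $A$ over $\mathbb{F}$ and every integer $k$ with $0\le k\le n/2$, there exists an $n\times n$ matrix $B$ commuting with $A$ such that $B^2=0$ and $\mathrm{rk}\,B=k$. (2) If $A$ and $B$ are nilpotent $n\times n$ matrices over $\mathbb{F}$, then for each integer $k$ with $0\le k\le n/2$ there exist an $n\times n$ matrix $C$ with $C^2=0$ and $\mathrm{rk}\,C=k$, and an invertible $P\in GL_n(\mathbb{F})$, such that $C$ commutes with $A$ and $PCP^{-1}$ commutes with $B$.
   Context: $\mathbb{F}$ is an algebraically closed field of characteristic $0$. *)

From HB Require Import structures.
From mathcomp Require Import all_boot all_order all_algebra.
Set Implicit Arguments. Unset Strict Implicit. Unset Printing Implicit Defensive.
Import GRing.Theory.
Local Open Scope ring_scope.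

Definition nilpotent_mx (F : fieldType) (n : nat) (A : 'M[F]_n) : Prop :=
  exists m : nat, A ^+ m = 0.

(* The argument works over any field.  For g, f with g A^m = 0 = A^m f and
   g A^(m-1) f != 0, the Hankel matrix H = (g A^(i+j) f)_(i,j<m) is invertible,
   and T w := K_f H^-1 R_w (R_w with rows w A^i, K_f with columns A^j f)
   commutes with A whenever w A^m = 0.  Then E1 := T g is an idempotent
   commuting with A whose image is the cyclic space of g, a "cyclic piece".
   Inside a piece of size m, T (g A^(m-k)) is square-zero of rank k for every
   k <= m/2, and two orthogonal pieces of odd sizes a = b + 2d are glued into
   a square-zero matrix of rank (a + b)/2.  Every idempotent E commuting with
   a nilpotent A splits off a piece of maximal size, so by induction on the
   rank E carries square-zero matrices commuting with A of all ranks up to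
   rank E / 2; E = 1 gives part (1).  Part (2) follows from part (1) for A
   and for B, since square-zero matrices of equal rank are similar. *)

From HB Require Import structures.
From mathcomp Require Import all_boot all_order all_algebra.
From mathcomp Require Import perm zify.
Set Implicit Arguments. Unset Strict Implicit. Unset Printing Implicit Defensive.
Import GRing.Theory.
Local Open Scope ring_scope.

Section Krylov.
Variables (F : fieldType) (n : nat) (A : 'M[F]_n).

Lemma comm_mxX (M : 'M[F]_n) i : GRing.comm A M -> A ^+ i *m M = M *m A ^+ i.
Proof. by move=> cAM; apply/commr_sym/commrX/commr_sym. Qed.

Lemma mulmx_expr_ge (w : 'rV[F]_n) m e :
  w *m A ^+ m = 0 -> (m <= e)%N -> w *m A ^+ e = 0.
Proof. by move=> wm le_me; rewrite -(subnKC le_me) exprD mulmxA wm mul0mx. Qed.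

Lemma mulmx_exprD p (w : 'M[F]_(p, n)) i j :
  w *m A ^+ i *m A ^+ j = w *m A ^+ (i + j).
Proof. by rewrite exprD mulmxA. Qed.

Definition krylov_rows m (w : 'rV[F]_n) : 'M_(m, n) :=
  \matrix_(i < m) (w *m A ^+ i).
Definition krylov_cols m (f : 'cV[F]_n) : 'M_(n, m) :=
  \matrix_(i < n, j < m) (A ^+ j *m f) i 0.
Definition shift_mx m : 'M[F]_m := \matrix_(i, j) ((i.+1 == j :> nat)%:R).

Lemma mulmx_shift m p (M : 'M[F]_(m, p)) i j :
  (shift_mx m *m M) i j = if (i.+1 < m)%N then M (insubd i i.+1) j else 0.
Proof.
rewrite mxE; case: ltnP => lt_im.
  rewrite (bigD1 (insubd i i.+1)) //= big1 ?addr0.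
    by rewrite mxE insubdK // eqxx mul1r.
  move=> k ne_k; rewrite mxE; case: eqP => [ik|]; last by rewrite mul0r.
  by case/eqP: ne_k; apply: val_inj; rewrite /= insubdK // ik.
rewrite big1 // => k _; rewrite mxE; case: eqP => [ik|]; last by rewrite mul0r.
by have := ltn_ord k; rewrite -ik ltnNge lt_im.
Qed.

Lemma mulmx_shift_tr m p (M : 'M[F]_(p, m)) i j :
  (M *m (shift_mx m)^T) i j = if (j.+1 < m)%N then M i (insubd j j.+1) else 0.
Proof.
rewrite -[M *m _]trmxK trmx_mul trmxK mxE mulmx_shift.
by case: ifP => _; rewrite // mxE.
Qed.

Lemma krylov_rows_mulA m w :
  w *m A ^+ m = 0 -> krylov_rows m w *m A = shift_mx m *m krylov_rows m w.
Proof.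
move=> wm; apply/matrixP => i j; rewrite mulmx_shift.
have -> : (krylov_rows m w *m A) i j = (w *m A ^+ i.+1) 0 j.
  by rewrite exprSr mulmxA mxE [RHS]mxE; apply: eq_bigr => k _; rewrite mxE.
case: ltnP => lt_im.
  have im : (insubd i i.+1 : nat) = i.+1 := insubdK i lt_im.
  by rewrite [RHS]mxE im.
have -> : i.+1 = m by apply/eqP; rewrite eqn_leq lt_im ltn_ord.
by rewrite wm mxE.
Qed.

Lemma krylov_cols_mulA m f :
  A ^+ m *m f = 0 -> A *m krylov_cols m f = krylov_cols m f *m (shift_mx m)^T.
Proof.
move=> Amf; apply/matrixP => i j; rewrite mulmx_shift_tr.
have -> : (A *m krylov_cols m f) i j = (A ^+ j.+1 *m f) i 0.
  by rewrite exprS -mulmxA mxE [RHS]mxE; apply: eq_bigr => k _; rewrite mxE.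
case: ltnP => lt_jm.
  have jm : (insubd j j.+1 : nat) = j.+1 := insubdK j lt_jm.
  by rewrite [in RHS]mxE jm.
have -> : j.+1 = m by apply/eqP; rewrite eqn_leq lt_jm ltn_ord.
by rewrite Amf mxE.
Qed.

Lemma hankelE m w f i j :
  (krylov_rows m w *m krylov_cols m f) i j = (w *m A ^+ (i + j) *m f) 0 0.
Proof.
rewrite exprD mulmxA -[_ *m A ^+ j *m f]mulmxA !mxE.
by apply: eq_bigr => k _; rewrite !mxE.
Qed.

(* The Hankel matrix vanishes below its antidiagonal and is nonzero on it,
   hence it is invertible. *)
Lemma hankel_unit m w f : w *m A ^+ m = 0 -> (w *m A ^+ m.-1 *m f) 0 0 != 0 ->
  krylov_rows m w *m krylov_cols m f \in unitmx.
Proof.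
move=> wm nz; set H := _ *m _.
pose s := perm (@rev_ord_inj m).
have trig : is_trig_mx (row_perm s H).
  apply/is_trig_mxP => i j lt_ij.
  rewrite mxE hankelE permE /= (mulmx_expr_ge wm) ?mul0mx ?mxE //.
  by move: (ltn_ord j) lt_ij; lia.
have : \det (row_perm s H) != 0.
  rewrite (det_trig trig); apply/prodf_neq0 => i _.
  rewrite mxE hankelE permE /=.
  suff -> : (m - i.+1 + i = m.-1)%N by [].
  by move: (ltn_ord i); lia.
by rewrite row_permE det_mulmx mulf_eq0 negb_or unitmxE unitfE => /andP[].
Qed.

Lemma krylov_rows_mulr m w (M : 'M[F]_n) :
  GRing.comm A M -> krylov_rows m w *m M = krylov_rows m (w *m M).
Proof.
move=> cAM; apply/row_matrixP => i; rewrite row_mul !rowK -!mulmxA.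
by congr (_ *m _); apply: comm_mxX.
Qed.

Lemma krylov_cols_mull m f (M : 'M[F]_n) :
  GRing.comm A M -> M *m krylov_cols m f = krylov_cols m (M *m f).
Proof.
move=> cAM; apply/matrixP => i j.
have -> : (M *m krylov_cols m f) i j = (M *m (A ^+ j *m f)) i 0.
  by rewrite !mxE; apply: eq_bigr => k _; rewrite mxE.
by rewrite [RHS]mxE mulmxA -(comm_mxX j cAM) -mulmxA.
Qed.

Lemma krylov_rows_sub m w j :
  w *m A ^+ m = 0 -> (w *m A ^+ j <= krylov_rows m w)%MS.
Proof.
move=> wm; case: (ltnP j m) => lt_jm.
  by have := row_sub (Ordinal lt_jm) (krylov_rows m w); rewrite rowK.
by rewrite (mulmx_expr_ge wm lt_jm) sub0mx.
Qed.

Lemma rank_krylov_rows m c w : (c <= m)%N -> w *m A ^+ c = 0 ->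
  ((0 < c)%N -> w *m A ^+ c.-1 != 0) -> \rank (krylov_rows m w) = c.
Proof.
move=> le_cm wc nz; apply/eqP; rewrite eqn_leq; apply/andP; split.
  apply: leq_trans (rank_leq_row (krylov_rows c w)); apply: mxrankS.
  by apply/row_subP => i; rewrite rowK krylov_rows_sub.
case: c le_cm wc nz => [//|c] le_cm wc /(_ isT) nz.
have /rV0Pn[j nz_j] := nz.
have H_unit : krylov_rows c.+1 w *m krylov_cols c.+1 (delta_mx j 0) \in unitmx.
  by apply: hankel_unit; rewrite // -colE mxE.
have := mxrankM_maxl (krylov_rows c.+1 w) (krylov_cols c.+1 (delta_mx j 0)).
rewrite mxrank_unit // => le_rk; apply: leq_trans le_rk _; apply: mxrankS.
by apply/row_subP => i; rewrite rowK krylov_rows_sub // (mulmx_expr_ge wc).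
Qed.

(* It maps g to w, commutes with A when w A^m = 0, and kills a complement of
   the cyclic space spanned by g; cyc_hom m g f g is a projector onto it. *)
Definition cyc_hom m g f (w : 'rV[F]_n) : 'M[F]_n :=
  krylov_cols m f *m invmx (krylov_rows m g *m krylov_cols m f) *m krylov_rows m w.

Definition cyclic_datum m (g : 'rV[F]_n) (f : 'cV[F]_n) :=
  [/\ g *m A ^+ m = 0, A ^+ m *m f = 0 & (g *m A ^+ m.-1 *m f) 0 0 != 0].

Lemma cyc_hom_mulr m g f w (M : 'M[F]_n) :
  GRing.comm A M -> cyc_hom m g f w *m M = cyc_hom m g f (w *m M).
Proof. by move=> cAM; rewrite /cyc_hom -mulmxA krylov_rows_mulr. Qed.

Lemma cyc_hom0 m g f : cyc_hom m g f 0 = 0.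
Proof.
rewrite /cyc_hom; have -> : krylov_rows m 0 = 0.
  by apply/row_matrixP => i; rewrite rowK row0 mul0mx.
by rewrite mulmx0.
Qed.

Lemma cyc_hom_fixl m g f (E : 'M[F]_n) w :
  GRing.comm A E -> E *m f = f -> E *m cyc_hom m g f w = cyc_hom m g f w.
Proof. by move=> cAE Ef; rewrite /cyc_hom !mulmxA krylov_cols_mull // Ef. Qed.

Section CyclicHom.
Variables (m : nat) (g : 'rV[F]_n) (f : 'cV[F]_n).
Hypothesis gf : cyclic_datum m g f.
Local Notation T := (cyc_hom m g f).

Let gAm : g *m A ^+ m = 0. Proof. by case: gf. Qed.
Let Amf : A ^+ m *m f = 0. Proof. by case: gf. Qed.
Let gf_nz : (g *m A ^+ m.-1 *m f) 0 0 != 0. Proof. by case: gf. Qed.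
Let H_unit : krylov_rows m g *m krylov_cols m f \in unitmx.
Proof. exact: hankel_unit. Qed.

Lemma cyclic_datum_gt0 : (0 < m)%N.
Proof. by case: m gAm gf_nz => // ->; rewrite mul0mx mxE eqxx. Qed.

Lemma cyclic_datum_top : g *m A ^+ m.-1 != 0.
Proof. by apply: contra gf_nz => /eqP ->; rewrite mul0mx mxE. Qed.

Lemma krylov_rows_cyc_hom w : krylov_rows m g *m T w = krylov_rows m w.
Proof. by rewrite /cyc_hom !mulmxA mulmxV // mul1mx. Qed.

Lemma cyc_hom_gen w : g *m T w = w.
Proof.
have := congr1 (row (Ordinal cyclic_datum_gt0)) (krylov_rows_cyc_hom w).
by rewrite row_mul !rowK !expr0 !mulmx1.
Qed.

(* The Hankel matrix intertwines the shift with its transpose, which makes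
   cyc_hom A-equivariant. *)
Lemma cyc_hom_comm w : w *m A ^+ m = 0 -> GRing.comm A (T w).
Proof.
move=> wm; pose H := krylov_rows m g *m krylov_cols m f.
have Hu : H \in unitmx := H_unit.
have invH_shift : invmx H *m shift_mx m = (shift_mx m)^T *m invmx H.
  have HS : shift_mx m *m H = H *m (shift_mx m)^T.
    by rewrite /H mulmxA -krylov_rows_mulA // -!mulmxA krylov_cols_mulA.
  apply: (canLR (mulKmx Hu)).
  by rewrite mulmxA -HS -mulmxA mulmxV // mulmx1.
rewrite /GRing.comm -!mulmxE /cyc_hom !mulmxA krylov_cols_mulA // -!mulmxA.
by congr (_ *m _); rewrite krylov_rows_mulA // !mulmxA invH_shift.
Qed.

Lemma cyc_hom_gen_expr w j : w *m A ^+ m = 0 -> g *m A ^+ j *m T w = w *m A ^+ j.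
Proof.
move=> wm; have cAT := cyc_hom_comm wm.
by rewrite -mulmxA (comm_mxX j cAT) mulmxA cyc_hom_gen.
Qed.

Lemma cyc_hom_eqmx w : (T w :=: krylov_rows m w)%MS.
Proof.
by apply/eqmxP; rewrite submxMl /= -{1}krylov_rows_cyc_hom submxMl.
Qed.

Lemma cyc_hom_idl w : T g *m T w = T w.
Proof. by rewrite {1}/cyc_hom -!mulmxA krylov_rows_cyc_hom /cyc_hom mulmxA. Qed.

End CyclicHom.

End Krylov.

Section Orthogonal.
Variables (F : fieldType) (n : nat).
Implicit Types (X Y Z E : 'M[F]_n).

Definition idempotent_mx E := E *m E = E.

(* X lives inside E: for an idempotent E this means that X maps into the image
   of E and vanishes on its kernel. *)
Definition under X E := E *m X = X /\ X *m E = X.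

Lemma idempotent_under E : idempotent_mx E -> under E E.
Proof. by []. Qed.

Definition ortho X Y := X *m Y = 0 /\ Y *m X = 0.

Lemma ortho_sym X Y : ortho X Y -> ortho Y X.
Proof. by case. Qed.

Lemma under_ortho X Y E : under X E -> ortho E Y -> ortho X Y.
Proof.
case=> EX XE [EY YE]; split.
  by rewrite -XE -mulmxA EY mulmx0.
by rewrite -EX mulmxA YE mul0mx.
Qed.

Lemma ortho_addl X Y Z : ortho X Z -> ortho Y Z -> ortho (X + Y) Z.
Proof.
by case=> XZ ZX [YZ ZY]; split; rewrite (mulmxDl, mulmxDr) ?XZ ?YZ ?ZX ?ZY addr0.
Qed.

Lemma under_add X Y E : under X E -> under Y E -> under (X + Y) E.
Proof.
by case=> EX XE [EY YE]; split; rewrite (mulmxDl, mulmxDr) ?EX ?EY ?XE ?YE.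
Qed.

Lemma under_addr X (E1 E2 : 'M[F]_n) :
  under X E1 -> ortho E1 E2 -> under X (E1 + E2).
Proof.
move=> XE1 E12; have [X2 X2'] := under_ortho XE1 E12; case: XE1 => E1X XE1.
by split; rewrite (mulmxDl, mulmxDr) ?E1X ?XE1 ?X2 ?X2' addr0.
Qed.

Lemma idempotent_add (E1 E2 : 'M[F]_n) :
  idempotent_mx E1 -> idempotent_mx E2 -> ortho E1 E2 -> idempotent_mx (E1 + E2).
Proof.
move=> i1 i2 [o12 o21].
by rewrite /idempotent_mx mulmxDr !mulmxDl i1 i2 o12 o21 addr0 add0r.
Qed.

(* Ranks add up on orthogonal blocks: the row spaces of X1 and X2 meet
   trivially, since their intersection is killed by E2 and fixed by E1. *)
Lemma rank_add_ortho (X1 X2 E1 E2 : 'M[F]_n) :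
  under X1 E1 -> under X2 E2 -> ortho E1 E2 ->
  \rank (X1 + X2)%R = (\rank X1 + \rank X2)%N.
Proof.
move=> X1E1 X2E2 E12.
have [[E1X1 X1E1'] [E2X2 X2E2']] := (X1E1, X2E2).
have E1X : E1 *m (X1 + X2) = X1.
  by rewrite mulmxDr E1X1 -E2X2 mulmxA E12.1 mul0mx addr0.
have E2X : E2 *m (X1 + X2) = X2.
  by rewrite mulmxDr E2X2 -E1X1 mulmxA E12.2 mul0mx add0r.
have sum_eq : ((X1 + X2)%R == X1 + X2)%MS.
  apply/andP; split; first exact: addmx_sub_adds.
  rewrite addsmx_sub; apply/andP; split; [rewrite -{1}E1X | rewrite -{1}E2X].
    exact: submxMl.
  exact: submxMl.
rewrite (eqmx_rank sum_eq) mxrank_disjoint_sum //.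
apply/eqP; rewrite -submx0.
have [D1 CX1] := submxP (capmxSl X1 X2).
have [D2 CX2] := submxP (capmxSr X1 X2).
have CE1 : (X1 :&: X2)%MS *m E1 = (X1 :&: X2)%MS by rewrite CX1 -mulmxA X1E1'.
have CE2 : (X1 :&: X2)%MS *m E2 = (X1 :&: X2)%MS by rewrite CX2 -mulmxA X2E2'.
by rewrite -CE1 -CE2 -mulmxA E12.2 mulmx0 sub0mx.
Qed.

Lemma idempotent_compl E (E1 : 'M[F]_n) : idempotent_mx E -> idempotent_mx E1 ->
  under E1 E -> [/\ idempotent_mx (E - E1), under (E - E1) E, ortho E1 (E - E1)
                  & \rank E = (\rank E1 + \rank (E - E1)%R)%N].
Proof.
move=> iE i1 [EE1 E1E].
have i2 : idempotent_mx (E - E1).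
  by rewrite /idempotent_mx mulmxBl !mulmxBr iE EE1 E1E i1 subrr subr0.
have E12 : ortho E1 (E - E1).
  by split; rewrite (mulmxBl, mulmxBr) ?EE1 ?E1E i1 subrr.
split=> //; first by split; rewrite (mulmxBl, mulmxBr) iE ?EE1 ?E1E.
by rewrite -(rank_add_ortho (idempotent_under i1) (idempotent_under i2) E12)
  addrC subrK.
Qed.

End Orthogonal.

Lemma split_half k a r : (k.*2 <= a + r)%N -> ~~ (odd a && odd r) ->
  exists k1 k2, [/\ k = (k1 + k2)%N, (k1.*2 <= a)%N & (k2.*2 <= r)%N].
Proof.
move=> le_k not_odd; exists (minn k a./2), (k - minn k a./2)%N.
have ea := odd_double_half a; have er := odd_double_half r.
by move: not_odd; case: (odd a) ea; case: (odd r) er => /= er ea // _; split; lia.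
Qed.

Section SquareZero.
Variables (F : fieldType) (n : nat) (A : 'M[F]_n).

Definition sqz_in (E : 'M[F]_n) k := exists B : 'M[F]_n,
  [/\ GRing.comm A B, B *m B = 0, \rank B = k & under B E].

Definition sqz_full (E : 'M[F]_n) := forall k, (k.*2 <= \rank E)%N -> sqz_in E k.

Lemma sqz_in0 E : sqz_in E 0.
Proof.
exists 0; split; rewrite ?mulmx0 ?mxrank0 //.
  by rewrite /GRing.comm mulr0 mul0r.
by split; rewrite ?mulmx0 ?mul0mx.
Qed.

Lemma sqz_in_add E1 E2 k1 k2 :
  ortho E1 E2 -> sqz_in E1 k1 -> sqz_in E2 k2 -> sqz_in (E1 + E2) (k1 + k2).
Proof.
move=> E12 [B1 [c1 s1 r1 u1]] [B2 [c2 s2 r2 u2]].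
have E21 := ortho_sym E12.
have [B12 B21] := under_ortho u1 (ortho_sym (under_ortho u2 E21)).
exists (B1 + B2); split.
- exact: commrD.
- by rewrite mulmxDr !mulmxDl s1 s2 B12 B21 !addr0.
- by rewrite (rank_add_ortho u1 u2 E12) r1 r2.
- by apply: under_add; [exact: under_addr | rewrite addrC; exact: under_addr].
Qed.

Lemma sqz_full_add E1 E2 : idempotent_mx E1 -> idempotent_mx E2 -> ortho E1 E2 ->
  ~~ (odd (\rank E1) && odd (\rank E2)) -> sqz_full E1 -> sqz_full E2 ->
  sqz_full (E1 + E2).
Proof.
move=> i1 i2 E12 not_odd full1 full2 k.
rewrite (rank_add_ortho (X1 := E1) (X2 := E2) _ _ E12) //.
move=> /split_half /(_ not_odd) [k1 [k2 [-> le1 le2]]].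
exact: sqz_in_add (full1 _ le1) (full2 _ le2).
Qed.

Section CyclicPiece.
Variables (m : nat) (g : 'rV[F]_n) (f : 'cV[F]_n).
Hypothesis gf : cyclic_datum A m g f.
Local Notation T := (cyc_hom A m g f).

Let gAm : g *m A ^+ m = 0. Proof. by case: gf. Qed.

Lemma cyc_piece_idem : idempotent_mx (T g).
Proof. exact: cyc_hom_idl. Qed.

Lemma cyc_piece_comm : GRing.comm A (T g).
Proof. exact: cyc_hom_comm. Qed.

Lemma cyc_piece_rank : \rank (T g) = m.
Proof.
rewrite (cyc_hom_eqmx gf) (@rank_krylov_rows _ _ A m m) // => _.
exact: cyclic_datum_top gf.
Qed.

Lemma cyc_hom_under w : w *m A ^+ m = 0 -> w *m T g = w -> under (T w) (T g).
Proof.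
move=> wm wT; split; first exact: cyc_hom_idl.
by rewrite cyc_hom_mulr ?wT //; apply: cyc_piece_comm.
Qed.

(* Inside a cyclic piece of size m, T (g A^(m-k)) is square-zero of rank k
   for every k <= m/2. *)
Lemma cyc_piece_full : sqz_full (T g).
Proof.
rewrite /sqz_full cyc_piece_rank => k le_km.
pose w := g *m A ^+ (m - k).
have wAm : w *m A ^+ m = 0 by rewrite mulmx_exprD (mulmx_expr_ge gAm) //; lia.
exists (T w); split.
- exact: cyc_hom_comm.
- rewrite cyc_hom_mulr; last exact: cyc_hom_comm.
  rewrite (cyc_hom_gen_expr gf _ wAm) mulmx_exprD (mulmx_expr_ge gAm) ?cyc_hom0 //.
  lia.
- rewrite (cyc_hom_eqmx gf) (@rank_krylov_rows _ _ A m k) //; first lia.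
    by rewrite mulmx_exprD subnK ?gAm //; lia.
  move=> k_gt0; rewrite mulmx_exprD.
  have -> : (m - k + k.-1 = m.-1)%N by lia.
  exact: cyclic_datum_top gf.
- apply: cyc_hom_under => //.
  by rewrite (cyc_hom_gen_expr gf).
Qed.

End CyclicPiece.

(* Two cyclic pieces of sizes a = b + 2d and b are glued by a square-zero
   matrix of rank b + d: with y = g1 A^d + g2, the matrix
   B = T1 y - T2 (y A^d) maps g1 to y, g2 to -y A^d, and y to 0. *)
Section GluedPair.
Variables (a b d : nat) (g1 g2 : 'rV[F]_n) (f1 f2 : 'cV[F]_n).
Hypotheses (gf1 : cyclic_datum A a g1 f1) (gf2 : cyclic_datum A b g2 f2).
Hypothesis size_ab : a = (b + d + d)%N.
Local Notation T1 := (cyc_hom A a g1 f1).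
Local Notation T2 := (cyc_hom A b g2 f2).
Hypothesis E12 : ortho (T1 g1) (T2 g2).

Let g1Aa : g1 *m A ^+ a = 0. Proof. by case: gf1. Qed.
Let g2Ab : g2 *m A ^+ b = 0. Proof. by case: gf2. Qed.
Let y := g1 *m A ^+ d + g2.
Let z := - (y *m A ^+ d).
Let B := T1 y + T2 z.

Let yA j : (b + d <= j)%N -> y *m A ^+ j = 0.
Proof.
move=> le_j; rewrite mulmxDl mulmx_exprD.
by rewrite (mulmx_expr_ge g1Aa) ?(mulmx_expr_ge g2Ab) ?addr0 //; lia.
Qed.

Let yAa : y *m A ^+ a = 0. Proof. by apply: yA; lia. Qed.
Let zAb : z *m A ^+ b = 0.
Proof. by rewrite /z mulNmx mulmx_exprD yA ?oppr0 //; lia. Qed.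

Let cAT1 : GRing.comm A (T1 y). Proof. exact: cyc_hom_comm. Qed.
Let cAT2 : GRing.comm A (T2 z). Proof. exact: cyc_hom_comm. Qed.
Let cAB : GRing.comm A B. Proof. exact: commrD. Qed.

Let E1T2 : T1 g1 *m T2 z = 0.
Proof. by rewrite -(cyc_hom_idl gf2) mulmxA E12.1 mul0mx. Qed.
Let E2T1 : T2 g2 *m T1 y = 0.
Proof. by rewrite -(cyc_hom_idl gf1) mulmxA E12.2 mul0mx. Qed.

Let g1B : g1 *m B = y.
Proof.
rewrite mulmxDr (cyc_hom_gen gf1) -(cyc_hom_gen gf1 g1) -mulmxA E1T2.
by rewrite mulmx0 addr0.
Qed.

Let g2B : g2 *m B = z.
Proof.
rewrite mulmxDr (cyc_hom_gen gf2) -(cyc_hom_gen gf2 g2) -mulmxA E2T1.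
by rewrite mulmx0 add0r.
Qed.

Let yB : y *m B = 0.
Proof. by rewrite {1}/y mulmxDl -mulmxA (comm_mxX _ cAB) mulmxA g1B g2B addrN. Qed.

Let zB : z *m B = 0.
Proof. by rewrite /z mulNmx -mulmxA (comm_mxX _ cAB) mulmxA yB mul0mx oppr0. Qed.

Let B_sqz : B *m B = 0.
Proof. by rewrite {1}/B mulmxDl !cyc_hom_mulr // yB zB !cyc_hom0 addr0. Qed.

Let yE1 : y *m T1 g1 = g1 *m A ^+ d.
Proof.
rewrite mulmxDl (cyc_hom_gen_expr gf1 d g1Aa) -{1}(cyc_hom_gen gf2 g2).
by rewrite -mulmxA E12.2 mulmx0 addr0.
Qed.

Let yE2 : y *m T2 g2 = g2.
Proof.
rewrite mulmxDl (cyc_hom_gen gf2) -mulmxA (comm_mxX _ (cyc_piece_comm gf2)).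
rewrite -(cyc_hom_gen gf1 g1) -mulmxA [T1 g1 *m _]mulmxA E12.1.
by rewrite mul0mx mulmx0 add0r.
Qed.

(* The row space of B is the cyclic space of y, of dimension b + d. *)
Let B_rank : \rank B = (b + d)%N.
Proof.
have B_eq : (B == krylov_rows A a y)%MS.
  apply/andP; split.
    rewrite addmx_sub ?(cyc_hom_eqmx gf1) ?(cyc_hom_eqmx gf2) //.
    apply/row_subP => i; rewrite rowK /z mulNmx mulmx_exprD eqmx_opp.
    exact: krylov_rows_sub.
  rewrite -(cyc_hom_eqmx gf1 y) -(cyc_hom_idl gf1 y).
  have -> : T1 g1 *m T1 y = T1 g1 *m B by rewrite mulmxDr E1T2 addr0.
  exact: submxMl.
rewrite (eqmx_rank B_eq) (@rank_krylov_rows _ _ A a (b + d)) //; first lia.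
  by apply: yA.
move=> _; apply: contraNneq (cyclic_datum_top gf1) => yA0.
have -> : a.-1 = (d + (b + d).-1)%N by lia.
rewrite -mulmx_exprD -yE1 -mulmxA -(comm_mxX _ (cyc_piece_comm gf1)).
by rewrite mulmxA yA0 mul0mx.
Qed.

Let B_under : under B (T1 g1 + T2 g2).
Proof.
have cAE := commrD (cyc_piece_comm gf1) (cyc_piece_comm gf2).
have yE : y *m (T1 g1 + T2 g2) = y by rewrite mulmxDr yE1 yE2.
have zE : z *m (T1 g1 + T2 g2) = z.
  by rewrite /z mulNmx -mulmxA (comm_mxX _ cAE) mulmxA yE.
split; last by rewrite mulmxDl !cyc_hom_mulr // yE zE.
rewrite mulmxDl !mulmxDr E1T2 E2T1 !cyc_hom_idl //.
by rewrite addr0 add0r.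
Qed.

Lemma glued_pair_sqz_in : sqz_in (T1 g1 + T2 g2) (b + d).
Proof. by exists B. Qed.

End GluedPair.

(* Two orthogonal cyclic pieces of odd sizes together are full: small ranks
   split between the pieces, the top rank (a + b) / 2 needs the gluing. *)
Lemma odd_pair_full a b g1 g2 f1 f2 :
  cyclic_datum A a g1 f1 -> cyclic_datum A b g2 f2 ->
  (b <= a)%N -> odd a -> odd b ->
  ortho (cyc_hom A a g1 f1 g1) (cyc_hom A b g2 f2 g2) ->
  sqz_full (cyc_hom A a g1 f1 g1 + cyc_hom A b g2 f2 g2).
Proof.
move=> gf1 gf2 le_ba odd_a odd_b E12 k.
have u1 := idempotent_under (cyc_piece_idem gf1).
have u2 := idempotent_under (cyc_piece_idem gf2).
rewrite (rank_add_ortho u1 u2 E12) !cyc_piece_rank // => le_k.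
have ea := odd_double_half a; have eb := odd_double_half b.
rewrite odd_a odd_b /= in ea eb.
case: (ltnP k (b + (a - b)./2)) => [lt_k | ge_k].
  have le_k' : (k.*2 <= a.-1 + b.-1)%N by lia.
  have even_ab : ~~ (odd a.-1 && odd b.-1) by rewrite -ea -eb /= odd_double.
  have [k1 [k2 [-> le1 le2]]] := split_half le_k' even_ab.
  apply: sqz_in_add E12 (cyc_piece_full gf1 _) (cyc_piece_full gf2 _);
    rewrite cyc_piece_rank //; lia.
have -> : k = (b + (a - b)./2)%N by lia.
apply: glued_pair_sqz_in => //; lia.
Qed.

(* Inside a nonzero idempotent E commuting with a nilpotent A, pick the least m
   with E A^m = 0 and an entry (i, j) with (E A^(m-1)) i j != 0: the i-th row of
   E and E times the j-th basis column generate a cyclic piece of size m. *)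
Lemma cyc_piece_ex E :
  nilpotent_mx A -> idempotent_mx E -> GRing.comm A E -> E != 0 ->
  exists m g f, [/\ cyclic_datum A m g f, under (cyc_hom A m g f g) E,
                   E *m A ^+ m = 0 & forall m', E *m A ^+ m' = 0 -> (m <= m')%N].
Proof.
move=> [N AN0] iE cAE E_nz.
have ex_m : exists m, E *m A ^+ m == 0 by exists N; rewrite AN0 mulmx0.
case: (ex_minnP ex_m) => m /eqP EAm min_m.
have m_gt0 : (0 < m)%N.
  by case: m EAm {min_m} => // /eqP; rewrite expr0 mulmx1 (negPf E_nz).
have EAm1_nz : E *m A ^+ m.-1 != 0.
  by apply/eqP => EA0; have := min_m _ (introT eqP EA0); lia.
have [i [j nz_ij]] := matrix0Pn _ EAm1_nz.
pose g := row i E; pose f := E *m (delta_mx j 0 : 'cV_n).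
have gA k : g *m A ^+ k = row i (E *m A ^+ k) by rewrite row_mul.
have gE : g *m E = g by rewrite -row_mul iE.
have Ef : E *m f = f by rewrite mulmxA iE.
exists m, g, f; split.
- split; first by rewrite gA EAm row0.
    by rewrite mulmxA comm_mxX // EAm mul0mx.
  rewrite mulmxA -[g *m _ *m E]mulmxA comm_mxX // mulmxA gE.
  by rewrite -colE gA mxE [row _ _ _ _]mxE.
- by split; [apply: cyc_hom_fixl | rewrite cyc_hom_mulr // gE].
- exact: EAm.
- by move=> m' EAm'; apply: min_m; apply/eqP.
Qed.

Lemma cyc_piece_split E : nilpotent_mx A -> idempotent_mx E -> GRing.comm A E ->
  E != 0 -> exists a g f,
  [/\ cyclic_datum A a g f, under (cyc_hom A a g f g) E, E *m A ^+ a = 0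
     & forall m', E *m A ^+ m' = 0 -> (a <= m')%N]
  /\ [/\ idempotent_mx (E - cyc_hom A a g f g),
         GRing.comm A (E - cyc_hom A a g f g),
         under (E - cyc_hom A a g f g) E,
         ortho (cyc_hom A a g f g) (E - cyc_hom A a g f g)
       & \rank E = (a + \rank (E - cyc_hom A a g f g)%R)%N].
Proof.
move=> nilA iE cAE E_nz.
have [a [g [f [gf E1E EAa min_a]]]] := cyc_piece_ex nilA iE cAE E_nz.
have [i' E'E E1E' rkE] := idempotent_compl iE (cyc_piece_idem gf) E1E.
exists a, g, f; split=> //; split=> //; last by rewrite rkE cyc_piece_rank.
exact: commrB (cyc_piece_comm gf).
Qed.

(* By induction on the
   rank, split off a cyclic piece E1 of maximal size a; the rest E' is full.
   If a and rank E' are both odd, split off a maximal cyclic piece E2 of size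
   b <= a from E': for b odd, glue E1 and E2; for b even, E2 is full and
   E1 + E'' is full by induction. *)
Lemma sqz_full_idem E : nilpotent_mx A -> idempotent_mx E -> GRing.comm A E ->
  sqz_full E.
Proof.
move=> nilA; move: {2}(\rank E).+1 (ltnSn (\rank E)) => N.
elim: N E => [//|N IH] E lt_EN iE cAE.
have [-> | E_nz] := eqVneq E 0.
  by move=> k; rewrite mxrank0 leqn0 double_eq0 => /eqP ->; apply: sqz_in0.
have [a [g1 [f1 [[gf1 _ EAa _] [i' c' E'E E1E' rk_E]]]]] :=
  cyc_piece_split nilA iE cAE E_nz.
have [i1 a_gt0] := (cyc_piece_idem gf1, cyclic_datum_gt0 gf1).
set E1 := cyc_hom A a g1 f1 g1 in i1 i' c' E'E E1E' rk_E.
set E' := E - E1 in i' c' E'E E1E' rk_E.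
have decE : E = E1 + E' by rewrite addrC subrK.
have [/andP[odd_a odd_E'] | not_odd] := boolP (odd a && odd (\rank E')); last first.
  rewrite decE; apply: sqz_full_add; rewrite ?cyc_piece_rank //.
    exact: cyc_piece_full.
  by apply: IH => //; lia.
have E'_nz : E' != 0 by apply: contraTneq odd_E' => ->; rewrite mxrank0.
have [b [g2 [f2 [[gf2 E2E' _ min_b] [i'' c'' E''E' E2E'' rk_E']]]]] :=
  cyc_piece_split nilA i' c' E'_nz.
have [i2 b_gt0] := (cyc_piece_idem gf2, cyclic_datum_gt0 gf2).
set E2 := cyc_hom A b g2 f2 g2 in E2E' i2 i'' c'' E''E' E2E'' rk_E'.
set E'' := E' - E2 in i'' c'' E''E' E2E'' rk_E'.
have le_ba : (b <= a)%N by apply: min_b; rewrite -E'E.2 -mulmxA EAa mulmx0.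
have E12 : ortho E1 E2 := ortho_sym (under_ortho E2E' (ortho_sym E1E')).
have E1E'' : ortho E1 E'' := ortho_sym (under_ortho E''E' (ortho_sym E1E')).
have [odd_b | even_b] := boolP (odd b).
  have -> : E = (E1 + E2) + E'' by rewrite decE /E'' -addrA [E2 + _]addrC subrK.
  apply: sqz_full_add.
  - exact: idempotent_add.
  - exact: i''.
  - exact: ortho_addl.
  - rewrite (rank_add_ortho (idempotent_under i1) (idempotent_under i2) E12).
    by rewrite !cyc_piece_rank // oddD odd_a odd_b.
  - exact: odd_pair_full.
  - by apply: IH => //; lia.
have -> : E = E2 + (E1 + E'') by rewrite decE /E'' [RHS]addrCA [E2 + _]addrC subrK.
apply: sqz_full_add.
- exact: i2.
- exact: idempotent_add.
- exact: ortho_sym (ortho_addl E12 (ortho_sym E2E'')).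
- by rewrite cyc_piece_rank // (negPf even_b).
- exact: cyc_piece_full.
- apply: IH; [|exact: idempotent_add | exact: commrD (cyc_piece_comm gf1) c''].
  rewrite (rank_add_ortho (idempotent_under i1) (idempotent_under i'') E1E'').
  by rewrite cyc_piece_rank //; lia.
Qed.

(* Part (1): the identity is an idempotent of rank n commuting with A. *)
Lemma nilpotent_sqz_commutant : nilpotent_mx A -> forall k, (k.*2 <= n)%N ->
  exists B : 'M[F]_n, [/\ A *m B = B *m A, B *m B = 0 & \rank B = k].
Proof.
move=> nilA k le_kn.
have i1 : idempotent_mx (1%:M : 'M[F]_n) by rewrite /idempotent_mx mulmx1.
have c1 : GRing.comm A 1%:M by rewrite /GRing.comm -!mulmxE mulmx1 mul1mx.
have [|B [cAB BB rkB _]] := sqz_full_idem nilA i1 c1 (k := k).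
  by rewrite mxrank1.
by exists B.
Qed.

End SquareZero.

Section SquareZeroSimilarity.
Variable F : fieldType.

Definition sqz_normal k l : 'M[F]_(k + (k + l)) := block_mx 0 (row_mx 1%:M 0) 0 0.

(* Let W be a basis of the image of X, U a family with U X = W, and Z a basis
   of a complement of W in ker X (which contains W as X^2 = 0).  Then the rows
   of U, W, Z form a basis in which X is in normal form. *)
Lemma sqz_normal_form k l (X : 'M[F]_(k + (k + l))) : X *m X = 0 -> \rank X = k ->
  exists2 Q, Q \in unitmx & Q *m X = sqz_normal k l *m Q.
Proof.
move=> XX rkX.
pose W : 'M_(k, k + (k + l)) := castmx (rkX, erefl) (row_base X).
have eqWX : (W :=: X)%MS by apply: eqmx_trans (eqmx_cast _ _) (eq_row_base X).
have rkW : \rank W = k by rewrite eqWX.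
pose U := W *m pinvmx X.
have UX : U *m X = W by rewrite /U mulmxKpV ?eqWX.
have W_ker : (W <= kermx X)%MS.
  have /submxP[D ->] : (W <= X)%MS by rewrite eqWX.
  by apply/sub_kermxP; rewrite -mulmxA XX mulmx0.
pose S := (kermx X :\: W)%MS.
have rkS : \rank S = l.
  have := mxrank_cap_compl (kermx X) W.
  by rewrite (capmx_idPr W_ker) rkW mxrank_ker rkX -/S; lia.
pose Z : 'M_(l, k + (k + l)) := castmx (rkS, erefl) (row_base S).
have eqZS : (Z :=: S)%MS by apply: eqmx_trans (eqmx_cast _ _) (eq_row_base S).
have ZX : Z *m X = 0 by apply/sub_kermxP; rewrite eqZS diffmxSl.
have WZ_ker : (W + Z <= kermx X)%MS by rewrite addsmx_sub W_ker eqZS diffmxSl.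
have WZ0 : (W :&: Z)%MS = 0.
  apply/eqP; rewrite -submx0 -(capmx_diff (kermx X) W) sub_capmx capmxSl andbT.
  by rewrite -/S -eqZS capmxSr.
have UWZ0 : (U :&: (W + Z))%MS = 0.
  apply/eqP; rewrite -submx0; have [D defD] := submxP (capmxSl U (W + Z)%MS).
  have : (U :&: (W + Z))%MS *m X = 0.
    by apply/sub_kermxP; apply: submx_trans (capmxSr _ _) WZ_ker.
  rewrite defD -mulmxA UX => /eqP; rewrite mulmx_free_eq0 /row_free ?rkW //.
  by move=> /eqP ->; rewrite mul0mx sub0mx.
exists (col_mx U (col_mx W Z)).
  rewrite -row_full_unit /row_full -addsmxE.
  rewrite (adds_eqmx (eqmx_refl U) (eqmx_sym (addsmxE W Z))).
  have rkU : \rank U = k.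
    by apply/eqP; rewrite eqn_leq rank_leq_row /= -{1}rkW -UX mxrankM_maxl.
  by rewrite !mxrank_disjoint_sum // rkU rkW eqZS rkS.
rewrite /sqz_normal mul_block_col !mul0mx mul_row_col mul1mx mul0mx !addr0 add0r.
by rewrite !mul_col_mx UX ZX (sub_kermxP W_ker) col_mx0.
Qed.

Lemma sqz_similar p (X Y : 'M[F]_p) : X *m X = 0 -> Y *m Y = 0 ->
  \rank X = \rank Y -> exists2 P, P \in unitmx & P *m X *m invmx P = Y.
Proof.
move=> XX YY rkXY.
have le_rk : ((\rank X).*2 <= p)%N.
  have /mxrankS : (X <= kermx X)%MS by apply/sub_kermxP.
  by rewrite mxrank_ker; have := rank_leq_row X; lia.
have [k [l [def_p rkX]]] : exists k l, p = (k + (k + l))%N /\ \rank X = k.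
  by exists (\rank X), (p - (\rank X).*2)%N; split => //; lia.
subst p; have rkY : \rank Y = k by rewrite -rkXY.
have [QX QX_unit defX] := sqz_normal_form XX rkX.
have [QY QY_unit defY] := sqz_normal_form YY rkY.
have YQ : Y *m invmx QY = invmx QY *m sqz_normal k l.
  rewrite -[RHS]mulmx1 -(mulmxV QY_unit) !mulmxA -[_ *m _ *m QY]mulmxA -defY.
  by rewrite mulmxA mulVmx // mul1mx.
pose P := invmx QY *m QX.
have P_unit : P \in unitmx by rewrite unitmx_mul unitmx_inv QY_unit.
have PX : P *m X = Y *m P by rewrite -mulmxA defX mulmxA -YQ mulmxA.
by exists P; rewrite // PX -mulmxA mulmxV ?mulmx1.
Qed.

End SquareZeroSimilarity.

Unset Implicit Arguments.

Theorem corollary2p5 (F : closedFieldType) (hchar : [pchar F] =i pred0) (n : nat) :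
  (forall (A : 'M[F]_n), nilpotent_mx A ->
     forall k : nat, (k.*2 <= n)%N ->
     exists B : 'M[F]_n,
       [/\ A *m B = B *m A, B *m B = 0 & \rank B = k])
  /\
  (forall (A B : 'M[F]_n), nilpotent_mx A -> nilpotent_mx B ->
     forall k : nat, (k.*2 <= n)%N ->
     exists (C P : 'M[F]_n),
       [/\ C *m C = 0, \rank C = k, P \in unitmx,
           A *m C = C *m A &
           B *m (P *m C *m invmx P) = (P *m C *m invmx P) *m B]).
Proof.
split; first exact: nilpotent_sqz_commutant.
move=> A B nilA nilB k le_kn.
have [C [cAC CC rkC]] := nilpotent_sqz_commutant nilA le_kn.
have [D [cBD DD rkD]] := nilpotent_sqz_commutant nilB le_kn.
have [P P_unit PCP] := sqz_similar CC DD (etrans rkC (esym rkD)).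
by exists C, P; rewrite PCP.
Qed.
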